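(* Let $\{(\Gamma_t,\theta_t)\}_{t\in[0,\underline t)}$ solve the framed curvature flow. Then $$\frac{d}{dt}L(\Gamma_t)=-\int_{\Gamma_t}\kappa\psi_1\,ds,\qquad \frac{d}{dt}A(\Sigma_t)=\int_{\Gamma_t}\kappa\,ds .$$
   Context: $S^1=\mathbb{R}/2\pi\mathbb{Z}$; closed curves $\Gamma_t$ parametrized by $\gamma(t,\cdot):S^1\to\mathbb{R}^3$, $g=\|\partial_u\gamma\|$, $ds=g\,du$, $\partial_s=g^{-1}\partial_u$, $L(\Gamma_t)$ length; Frenet frame $T,N,B$, curvature $\kappa$; angle function $\theta$, $\nu_\theta=\cos\theta N+\sin\theta B$, $\psi_1=\kappa\cos\theta$. Framed curvature flow: $\partial_t\gamma=\kappa\nu_\theta$, $\partial_t\theta=\upsilon_\theta$ with some $\upsilon_\theta\in\mathcal C^1$. The trajectory surface $\Sigma_t=\bigcup_{t'\in[0,t)}\Gamma_{t'}$ is parametrized by $(t',u)\mapsto\gamma(t',u)$, and $A(\Sigma_t)=\int_0^t\int_{S^1}g\,\kappa\,du\,dt'$ is its area. *)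

From Stdlib Require Import Reals.
From Coquelicot Require Import Coquelicot.
Open Scope R_scope.

Definition V3 := (R * R * R)%type.
Definition mkV (a b c : R) : V3 := (a, b, c).
Definition v1 (v : V3) : R := fst (fst v).
Definition v2 (v : V3) : R := snd (fst v).
Definition v3 (v : V3) : R := snd v.
Definition vadd (v w : V3) : V3 := mkV (v1 v + v1 w) (v2 v + v2 w) (v3 v + v3 w).
Definition vscal (a : R) (v : V3) : V3 := mkV (a * v1 v) (a * v2 v) (a * v3 v).
Definition vdot (v w : V3) : R := v1 v * v1 w + v2 v * v2 w + v3 v * v3 w.
Definition vcross (v w : V3) : V3 :=
  mkV (v2 v * v3 w - v3 v * v2 w) (v3 v * v1 w - v1 v * v3 w) (v1 v * v2 w - v2 v * v1 w).
Definition vnorm (v : V3) : R := sqrt (vdot v v).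

Definition Dt (f : R -> R -> R) : R -> R -> R :=
  fun t u => Derive (fun t' => f t' u) t.
Definition Du (f : R -> R -> R) : R -> R -> R :=
  fun t u => Derive (fun u' => f t u') u.
Fixpoint DtN (i : nat) (f : R -> R -> R) : R -> R -> R :=
  match i with O => f | S i => Dt (DtN i f) end.
Fixpoint DuN (j : nat) (f : R -> R -> R) : R -> R -> R :=
  match j with O => f | S j => Du (DuN j f) end.

Definition DtV (g : R -> R -> V3) : R -> R -> V3 :=
  fun t u => mkV (Dt (fun t u => v1 (g t u)) t u) (Dt (fun t u => v2 (g t u)) t u)
                 (Dt (fun t u => v3 (g t u)) t u).
Definition DuV (g : R -> R -> V3) : R -> R -> V3 :=
  fun t u => mkV (Du (fun t u => v1 (g t u)) t u) (Du (fun t u => v2 (g t u)) t u)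
                 (Du (fun t u => v3 (g t u)) t u).

Definition inI (tbar : Rbar) (t : R) : Prop := 0 <= t /\ Rbar_lt t tbar.
Definition inIo (tbar : Rbar) (t : R) : Prop := 0 < t /\ Rbar_lt t tbar.

Definition unc (f : R -> R -> R) : R * R -> R := fun p => f (fst p) (snd p).

Definition smooth_on (tbar : Rbar) (f : R -> R -> R) : Prop :=
  (forall i j t u, inIo tbar t ->
     ex_derive (fun t' => DtN i (DuN j f) t' u) t /\
     ex_derive (fun u' => DtN i (DuN j f) t u') u /\
     continuous (unc (DtN i (DuN j f))) (t, u)) /\
  (forall j t u, inI tbar t ->
     ex_derive (fun u' => DuN j f t u') u /\
     filterlim (unc (DuN j f)) (within (fun p : R * R => 0 <= fst p) (locally (t, u)))
               (locally (DuN j f t u))).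

Definition smoothV_on (tbar : Rbar) (g : R -> R -> V3) : Prop :=
  smooth_on tbar (fun t u => v1 (g t u)) /\ smooth_on tbar (fun t u => v2 (g t u)) /\
  smooth_on tbar (fun t u => v3 (g t u)).

Definition C1_on (tbar : Rbar) (f : R -> R -> R) : Prop :=
  forall t u, inIo tbar t ->
    ex_derive (fun t' => f t' u) t /\ ex_derive (fun u' => f t u') u /\
    continuous (unc f) (t, u) /\ continuous (unc (Dt f)) (t, u) /\
    continuous (unc (Du f)) (t, u).

Section Geom.
Variable gamma : R -> R -> V3.
Definition gfac (t u : R) : R := vnorm (DuV gamma t u).
Definition Tan (t u : R) : V3 := vscal (/ gfac t u) (DuV gamma t u).
Definition dsTan (t u : R) : V3 := vscal (/ gfac t u) (DuV Tan t u).
Definition kappa (t u : R) : R := vnorm (dsTan t u).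
Definition Nor (t u : R) : V3 := vscal (/ kappa t u) (dsTan t u).
Definition Bin (t u : R) : V3 := vcross (Tan t u) (Nor t u).
Definition nu_theta (theta : R -> R -> R) (t u : R) : V3 :=
  vadd (vscal (cos (theta t u)) (Nor t u)) (vscal (sin (theta t u)) (Bin t u)).
Definition psi1 (theta : R -> R -> R) (t u : R) : R := kappa t u * cos (theta t u).
Definition curve_length (t : R) : R := RInt (fun u => gfac t u) 0 (2 * PI).
Definition traj_area (t : R) : R :=
  RInt (fun t' => RInt (fun u => gfac t' u * kappa t' u) 0 (2 * PI)) 0 t.
End Geom.

Definition framed_curvature_flow (tbar : Rbar) (gamma : R -> R -> V3)
    (theta : R -> R -> R) : Prop :=
  (forall t u, inI tbar t -> gamma t (u + 2 * PI) = gamma t u) /\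
  smoothV_on tbar gamma /\
  (* regular, with nonvanishing curvature so the Frenet frame exists *)
  (forall t u, inI tbar t -> 0 < gfac gamma t u) /\
  (forall t u, inI tbar t -> 0 < kappa gamma t u) /\
  (forall t u, inIo tbar t -> ex_derive (fun t' => theta t' u) t) /\
  (forall t u, inIo tbar t -> continuous (unc theta) (t, u)) /\
  C1_on tbar (Dt theta) /\
  (forall t u, inIo tbar t ->
     DtV gamma t u = vscal (kappa gamma t u) (nu_theta gamma theta t u)).

From Stdlib Require Import Reals Lra Psatz.
From Coquelicot Require Import Coquelicot.
Open Scope R_scope.

(* With [g = |d_u gamma|] and [T = d_u gamma / g], the length is [L = int g du] and
   [d_t g = <T, d_t d_u gamma>].  The flow is normal, so [<T, d_t gamma> = 0]; differentiating
   in [u] and exchanging [d_u d_t = d_t d_u] gives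
   [<T, d_t d_u gamma> = - <d_u T, kappa nu_theta> = - g kappa^2 cos theta = - kappa psi_1 g],
   and differentiating under the integral sign gives the first formula.  The area is
   [int_0^t F] with [F t' = int g kappa du], and [g kappa = |d_u T|] is continuous up to
   [t' = 0], so the second formula is the fundamental theorem of calculus. *)

Lemma V3_ext (v w : V3) : v1 v = v1 w -> v2 v = v2 w -> v3 v = v3 w -> v = w.
Proof. destruct v as [[a b] c], w as [[a' b'] c']. cbv. intros -> -> ->. reflexivity. Qed.

Ltac vsimpl := unfold vdot, vcross, vscal, vadd, mkV, v1, v2, v3 in *; simpl in *.

Lemma vdot_comm v w : vdot v w = vdot w v.
Proof. vsimpl. ring. Qed.

Lemma vdot_scal_l a v w : vdot (vscal a v) w = a * vdot v w.
Proof. vsimpl. ring. Qed.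

Lemma vdot_scal_r a v w : vdot v (vscal a w) = a * vdot v w.
Proof. vsimpl. ring. Qed.

Lemma vdot_add_r u v w : vdot u (vadd v w) = vdot u v + vdot u w.
Proof. vsimpl. ring. Qed.

Lemma vdot_cross_l a b : vdot a (vcross a b) = 0.
Proof. vsimpl. ring. Qed.

Lemma vdot_self_ge0 v : 0 <= vdot v v.
Proof. vsimpl. nra. Qed.

Lemma vnorm_sqr v : vnorm v * vnorm v = vdot v v.
Proof. apply sqrt_sqrt, vdot_self_ge0. Qed.

Lemma vdot_self_gt0 v : 0 < vnorm v -> 0 < vdot v v.
Proof. intros Hv. rewrite <- vnorm_sqr. nra. Qed.

Lemma vnorm_scal a v : vnorm (vscal a v) = Rabs a * vnorm v.
Proof.
  unfold vnorm. rewrite vdot_scal_l, vdot_scal_r, <- Rmult_assoc, sqrt_mult_alt.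
  - now rewrite <- sqrt_Rsqr_abs.
  - apply Rle_0_sqr.
Qed.

Definition rotated_normal (T D : V3) (th : R) : V3 :=
  vadd (vscal (cos th) (vscal (/ vnorm D) D))
       (vscal (sin th) (vcross T (vscal (/ vnorm D) D))).

Lemma vdot_rotated_normal_l T D th :
  vdot T D = 0 -> vdot T (rotated_normal T D th) = 0.
Proof.
  intros HTD. unfold rotated_normal.
  rewrite vdot_add_r, !vdot_scal_r, vdot_cross_l, HTD. ring.
Qed.

Lemma vdot_rotated_normal_r T D th :
  0 < vnorm D -> vdot D (rotated_normal T D th) = vnorm D * cos th.
Proof.
  intros HD. unfold rotated_normal.
  assert (HDT : vdot D (vcross T (vscal (/ vnorm D) D)) = 0) by (vsimpl; ring).
  rewrite vdot_add_r, !vdot_scal_r, HDT, <- vnorm_sqr. field. lra.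
Qed.

Definition is_deriveV (p : R -> V3) (x : R) (l : V3) : Prop :=
  is_derive (fun y => v1 (p y)) x (v1 l) /\ is_derive (fun y => v2 (p y)) x (v2 l) /\
  is_derive (fun y => v3 (p y)) x (v3 l).

Definition DeriveV (p : R -> V3) (x : R) : V3 :=
  mkV (Derive (fun y => v1 (p y)) x) (Derive (fun y => v2 (p y)) x)
      (Derive (fun y => v3 (p y)) x).

Lemma is_deriveV_DeriveV p x :
  ex_derive (fun y => v1 (p y)) x -> ex_derive (fun y => v2 (p y)) x ->
  ex_derive (fun y => v3 (p y)) x -> is_deriveV p x (DeriveV p x).
Proof. intros H1 H2 H3. split; [|split]; now apply Derive_correct. Qed.

Lemma is_deriveV_unique p x l : is_deriveV p x l -> DeriveV p x = l.
Proof. intros (H1 & H2 & H3). apply V3_ext; now apply is_derive_unique. Qed.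

Lemma is_derive_eq (f g : R -> R) x l l' :
  (forall y, f y = g y) -> l = l' -> is_derive f x l -> is_derive g x l'.
Proof. intros Hfg <-. apply is_derive_ext, Hfg. Qed.

Lemma is_derive_Rmult (f g : R -> R) x df dg :
  is_derive f x df -> is_derive g x dg ->
  is_derive (fun y => f y * g y) x (df * g x + f x * dg).
Proof. intros Hf Hg. apply (is_derive_mult f g x df dg Hf Hg), Rmult_comm. Qed.

Lemma is_derive_vdot p q x dp dq :
  is_deriveV p x dp -> is_deriveV q x dq ->
  is_derive (fun y => vdot (p y) (q y)) x (vdot dp (q x) + vdot (p x) dq).
Proof.
  intros (P1 & P2 & P3) (Q1 & Q2 & Q3).
  eapply is_derive_eq; [reflexivity| |].
  2: apply @is_derive_plus; [apply @is_derive_plus|]; apply is_derive_Rmult; eassumption.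
  unfold vdot, plus. simpl. ring.
Qed.

Lemma is_derive_vnorm p x dp :
  is_deriveV p x dp -> 0 < vnorm (p x) ->
  is_derive (fun y => vnorm (p y)) x (vdot (p x) dp / vnorm (p x)).
Proof.
  intros Hp Hx.
  eapply is_derive_eq; [reflexivity| |].
  2: apply is_derive_sqrt; [apply (is_derive_vdot p p x dp dp Hp Hp)| now apply vdot_self_gt0].
  rewrite (vdot_comm dp). unfold vnorm in *. simpl. field. lra.
Qed.

Lemma is_deriveV_scal (a : R -> R) p x da dp :
  is_derive a x da -> is_deriveV p x dp ->
  is_deriveV (fun y => vscal (a y) (p y)) x (vadd (vscal da (p x)) (vscal (a x) dp)).
Proof. intros Ha (P1 & P2 & P3). split; [|split]; now apply is_derive_Rmult. Qed.

Definition normalize_derivative (a b : V3) : V3 :=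
  vscal (/ vnorm a) (vadd b (vscal (- (vdot a b / vdot a a)) a)).

Lemma vdot_normalize_derivative a b :
  0 < vnorm a -> vdot a (normalize_derivative a b) = 0.
Proof.
  intros Ha. pose proof (vdot_self_gt0 a Ha).
  unfold normalize_derivative. rewrite vdot_scal_r, vdot_add_r, vdot_scal_r. field. lra.
Qed.

Lemma is_deriveV_normalize p x dp :
  is_deriveV p x dp -> 0 < vnorm (p x) ->
  is_deriveV (fun y => vscal (/ vnorm (p y)) (p y)) x (normalize_derivative (p x) dp).
Proof.
  intros Hp Hx.
  assert (Hinv := is_derive_inv _ _ _ (is_derive_vnorm p x dp Hp Hx) (Rgt_not_eq _ _ Hx)).
  replace (normalize_derivative (p x) dp) with
    (vadd (vscal (- (vdot (p x) dp / vnorm (p x)) / vnorm (p x) ^ 2) (p x))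
          (vscal (/ vnorm (p x)) dp)).
  - exact (is_deriveV_scal (fun y => / vnorm (p y)) p x _ dp Hinv Hp).
  - unfold normalize_derivative. rewrite <- vnorm_sqr.
    apply V3_ext; vsimpl; field; lra.
Qed.

Lemma continuity_2d_pt_sqrt (f : R -> R -> R) x y :
  continuity_2d_pt f x y -> continuity_2d_pt (fun a b => sqrt (f a b)) x y.
Proof.
  rewrite !continuity_2d_pt_filterlim. intros Hf.
  exact (filterlim_comp _ _ _ _ sqrt _ _ _ Hf (continuous_sqrt _)).
Qed.

Lemma continuity_2d_pt_continuity_pt (f : R -> R -> R) x y :
  continuity_2d_pt f x y -> continuity_pt (f x) y.
Proof.
  intros Hf eps Heps. destruct (Hf (mkposreal eps Heps)) as [d Hd].
  exists d. split; [apply cond_pos|]. intros z [_ Hz].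
  apply Hd; [|exact Hz]. rewrite Rminus_eq_0, Rabs_R0. apply cond_pos.
Qed.

Definition continuity_2d_ptV (F : R -> R -> V3) (x y : R) : Prop :=
  continuity_2d_pt (fun a b => v1 (F a b)) x y /\
  continuity_2d_pt (fun a b => v2 (F a b)) x y /\
  continuity_2d_pt (fun a b => v3 (F a b)) x y.

Lemma continuity_2d_pt_vdot (F G : R -> R -> V3) x y :
  continuity_2d_ptV F x y -> continuity_2d_ptV G x y ->
  continuity_2d_pt (fun a b => vdot (F a b) (G a b)) x y.
Proof.
  intros (F1 & F2 & F3) (G1 & G2 & G3).
  repeat apply continuity_2d_pt_plus; now apply continuity_2d_pt_mult.
Qed.

Lemma continuity_2d_pt_vnorm (F : R -> R -> V3) x y :
  continuity_2d_ptV F x y -> continuity_2d_pt (fun a b => vnorm (F a b)) x y.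
Proof.
  intros HF. apply (continuity_2d_pt_sqrt (fun a b => vdot (F a b) (F a b))).
  now apply continuity_2d_pt_vdot.
Qed.

Lemma continuity_2d_ptV_normalize_derivative (F G : R -> R -> V3) x y :
  continuity_2d_ptV F x y -> continuity_2d_ptV G x y -> 0 < vnorm (F x y) ->
  continuity_2d_ptV (fun a b => normalize_derivative (F a b) (G a b)) x y.
Proof.
  intros HF HG Hpos.
  assert (HFF := continuity_2d_pt_vdot F F x y HF HF).
  assert (HFG := continuity_2d_pt_vdot F G x y HF HG).
  assert (Hn := continuity_2d_pt_vnorm F x y HF).
  assert (Hinv := continuity_2d_pt_inv _ x y Hn (Rgt_not_eq _ _ Hpos)).
  assert (Hq := continuity_2d_pt_mult _ _ x y HFG
                  (continuity_2d_pt_inv _ x y HFF (Rgt_not_eq _ _ (vdot_self_gt0 _ Hpos)))).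
  destruct HF as (F1 & F2 & F3), HG as (G1 & G2 & G3).
  split; [|split]; apply continuity_2d_pt_mult; try exact Hinv;
    apply continuity_2d_pt_plus; try assumption;
    apply continuity_2d_pt_mult; try assumption; now apply continuity_2d_pt_opp.
Qed.

Lemma Rabs_Rmax0_le a s : Rabs (Rmax 0 a - Rmax 0 s) <= Rabs (a - s).
Proof.
  unfold Rmax; destruct Rle_dec, Rle_dec; unfold Rabs; repeat destruct Rcase_abs; lra.
Qed.

Lemma continuity_2d_pt_clamp (F : R -> R -> R) s u :
  filterlim (unc F) (within (fun p : R * R => 0 <= fst p) (locally (Rmax 0 s, u)))
    (locally (F (Rmax 0 s) u)) ->
  continuity_2d_pt (fun a b => F (Rmax 0 a) b) s u.
Proof.
  intros HF eps. destruct (proj1 (filterlim_locally _ _) HF eps) as [d Hd].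
  exists d. intros a b Ha Hb.
  apply (Hd (Rmax 0 a, b)); [split|apply Rmax_l].
  - exact (Rle_lt_trans _ _ _ (Rabs_Rmax0_le a s) Ha).
  - exact Hb.
Qed.

Lemma ex_RInt_continuity_2d_pt (f : R -> R -> R) s a b : a <= b ->
  (forall u, a <= u <= b -> continuity_2d_pt f s u) -> ex_RInt (f s) a b.
Proof.
  intros Hab Hf. apply (ex_RInt_continuous (V := R_CompleteNormedModule)). intros z Hz.
  rewrite Rmin_left, Rmax_right in Hz by exact Hab.
  now apply continuity_pt_filterlim, continuity_2d_pt_continuity_pt, Hf.
Qed.

(* Uniform continuity of [f] on [{s0} x [a, b]] controls the integrand uniformly in [u]. *)
Lemma continuous_RInt_param (f : R -> R -> R) s0 a b : a < b ->
  locally s0 (fun s => forall u, a <= u <= b -> continuity_2d_pt f s u) ->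
  continuous (fun s => RInt (f s) a b) s0.
Proof.
  intros Hab [d1 Hd1]. apply continuity_pt_filterlim. intros eps Heps.
  set (e := eps / (2 * (b - a))).
  assert (He : 0 < e) by (apply Rdiv_lt_0_compat; lra).
  destruct (uniform_continuity_2d_1d' f a b s0 (Hd1 s0 (ball_center _ _)) (mkposreal e He))
    as [d Hd].
  exists (Rmin d d1). split; [apply Rmin_pos; apply cond_pos|].
  intros s [_ Hs]. simpl in Hs |- *. unfold R_dist in Hs |- *.
  assert (Hsd := Rlt_le_trans _ _ _ Hs (Rmin_l d d1)).
  assert (Hs1 := Hd1 s (Rlt_le_trans _ _ _ Hs (Rmin_r d d1))).
  assert (E1 : ex_RInt (f s) a b) by (apply ex_RInt_continuity_2d_pt; auto; lra).
  assert (E0 : ex_RInt (f s0) a b)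
    by (apply ex_RInt_continuity_2d_pt; [lra|]; apply Hd1, ball_center).
  replace (RInt (f s) a b - RInt (f s0) a b) with (RInt (fun u => f s u - f s0 u) a b)
    by now rewrite (RInt_minus (V := R_CompleteNormedModule)).
  apply Rle_lt_trans with ((b - a) * e); [|unfold e; field_simplify; lra].
  apply abs_RInt_le_const; [lra| now apply (ex_RInt_minus (V := R_NormedModule))|].
  intros u Hu. left. apply Rabs_lt_between' in Hsd.
  pose proof (cond_pos d).
  apply (Hd u s0 u s Hu); try lra.
  rewrite Rminus_eq_0, Rabs_R0. apply cond_pos.
Qed.

Lemma second_difference_mean_value (f : R -> R -> R) t u k h :
  (forall t' u', Rabs (t' - t) <= Rabs k -> Rabs (u' - u) <= Rabs h ->
     ex_derive (fun z => f t' z) u' /\ ex_derive (fun z => Du f z u') t') ->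
  exists tau xi, Rabs (tau - t) <= Rabs k /\ Rabs (xi - u) <= Rabs h /\
    f (t + k) (u + h) - f t (u + h) - (f (t + k) u - f t u) = Dt (Du f) tau xi * k * h.
Proof.
  intros Hf.
  assert (Hk : Rabs (t + k - t) <= Rabs k) by (replace (t + k - t) with k by ring; lra).
  assert (Ht : Rabs (t - t) <= Rabs k) by (rewrite Rminus_eq_0, Rabs_R0; apply Rabs_pos).
  destruct (MVT_cor4 (fun w => f (t + k) w - f t w) (fun w => Du f (t + k) w - Du f t w)
              u (Rabs h)) with (b := u + h) as (xi & Hxi & Hxi_u).
  { intros c Hc. apply (is_derive_minus (fun w => f (t + k) w) (fun w => f t w)).
    - apply Derive_correct. exact (proj1 (Hf _ _ Hk Hc)).
    - apply Derive_correct. exact (proj1 (Hf _ _ Ht Hc)). }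
  { replace (u + h - u) with h by ring. lra. }
  replace (u + h - u) with h in Hxi, Hxi_u by ring.
  destruct (MVT_cor4 (fun z => Du f z xi) (fun z => Dt (Du f) z xi) t (Rabs k))
    with (b := t + k) as (tau & Htau & Htau_t).
  { intros c Hc. apply Derive_correct. exact (proj2 (Hf _ _ Hc Hxi_u)). }
  { exact Hk. }
  replace (t + k - t) with k in Htau, Htau_t by ring.
  exists tau, xi. split; [exact Htau_t| split; [exact Hxi_u|]].
  rewrite Hxi, Htau. ring.
Qed.

Lemma Rabs_div_sub_lt (P h E e : R) :
  h <> 0 -> Rabs (h * E - P) < Rabs h * e -> Rabs (P / h - E) < e.
Proof.
  intros Hh HP. assert (Hpos : 0 < Rabs h) by now apply Rabs_pos_lt.
  replace (P / h - E) with (- (h * E - P) / h) by (field; exact Hh).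
  unfold Rdiv. rewrite Rabs_mult, Rabs_Ropp, Rabs_inv.
  apply Rlt_div_l; [exact Hpos|]. lra.
Qed.

(* Peano's form of Schwarz's theorem: only [d_t d_u f] needs to be continuous. *)
Lemma is_derive_Dt_swap (f : R -> R -> R) t u :
  locally_2d (fun t' u' => ex_derive (fun z => f z u') t' /\ ex_derive (fun z => f t' z) u' /\
                           ex_derive (fun z => Du f z u') t') t u ->
  continuity_2d_pt (Dt (Du f)) t u ->
  is_derive (fun z => Dt f t z) u (Dt (Du f) t u).
Proof.
  intros [d0 Hd0] Hc. apply is_derive_Reals. intros eps Heps.
  destruct (Hc (mkposreal (eps / 2) ltac:(lra))) as [d1 Hd1]. simpl in Hd1.
  assert (Hd : 0 < Rmin d0 d1) by (apply Rmin_pos; apply cond_pos).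
  pose proof (Rmin_l d0 d1). pose proof (Rmin_r d0 d1).
  exists (mkposreal _ Hd). simpl. intros h Hh0 Hh.
  assert (Hphi : derivable_pt_lim (fun z => f z (u + h) - f z u) t
                                 (Dt f t (u + h) - Dt f t u)).
  { assert (Ht0 : Rabs (t - t) < d0) by (rewrite Rminus_eq_0, Rabs_R0; apply cond_pos).
    assert (Hu0 : Rabs (u - u) < d0) by (rewrite Rminus_eq_0, Rabs_R0; apply cond_pos).
    assert (Huh : Rabs (u + h - u) < d0) by (replace (u + h - u) with h by ring; lra).
    apply is_derive_Reals, (is_derive_minus (fun z => f z (u + h)) (fun z => f z u));
      apply Derive_correct;
      [exact (proj1 (Hd0 _ _ Ht0 Huh))| exact (proj1 (Hd0 _ _ Ht0 Hu0))]. }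
  assert (Hhe : 0 < Rabs h * (eps / 2)) by (pose proof (Rabs_pos_lt h Hh0); nra).
  destruct (Hphi _ Hhe) as [dk Hdk].
  set (k := Rmin dk (Rmin d0 d1) / 2).
  assert (Hk : 0 < k < Rmin dk (Rmin d0 d1))
    by (pose proof (Rmin_pos dk _ (cond_pos dk) Hd); unfold k; lra).
  pose proof (Rmin_l dk (Rmin d0 d1)). pose proof (Rmin_r dk (Rmin d0 d1)).
  destruct (second_difference_mean_value f t u k h) as (tau & xi & Htau & Hxi & Hdiff).
  { intros t' u' Ht' Hu'. rewrite (Rabs_pos_eq k) in Ht' by lra.
    destruct (Hd0 t' u' ltac:(lra) ltac:(lra)) as (_ & Hu & Ht). split; assumption. }
  rewrite (Rabs_pos_eq k) in Htau by lra.
  assert (HE : Rabs (Dt (Du f) tau xi - Dt (Du f) t u) < eps / 2) by (apply Hd1; lra).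
  specialize (Hdk k ltac:(lra) ltac:(rewrite Rabs_pos_eq; lra)).
  replace ((f (t + k) (u + h) - f (t + k) u - (f t (u + h) - f t u)) / k)
    with (h * Dt (Du f) tau xi) in Hdk by (field_simplify_eq; [nra|lra]).
  pose proof (Rabs_div_sub_lt _ _ _ _ Hh0 Hdk).
  replace (_ - Dt (Du f) t u) with
    ((Dt f t (u + h) - Dt f t u) / h - Dt (Du f) tau xi + (Dt (Du f) tau xi - Dt (Du f) t u))
    by ring.
  eapply Rle_lt_trans; [apply Rabs_triang|]. lra.
Qed.

Lemma inIo_inI tbar t : inIo tbar t -> inI tbar t.
Proof. intros [Ht0 Ht]. split; [lra|exact Ht]. Qed.

Lemma inIo_locally tbar t : inIo tbar t -> locally t (inIo tbar).
Proof. exact (open_and _ _ (open_gt 0) (fun x Hx => open_Rbar_lt' x tbar Hx) t). Qed.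

Lemma inI_Rmax0 tbar (s : R) : Rbar_lt 0 tbar -> Rbar_lt s tbar -> inI tbar (Rmax 0 s).
Proof. intros H0 Hs. split; [apply Rmax_l|]. unfold Rmax. destruct Rle_dec; assumption. Qed.

Section SmoothOn.

Variables (tbar : Rbar) (f : R -> R -> R).
Hypothesis Hf : smooth_on tbar f.

Lemma smooth_on_ex_derive_t i j t u :
  inIo tbar t -> ex_derive (fun t' => DtN i (DuN j f) t' u) t.
Proof. intros Ht. exact (proj1 (proj1 Hf i j t u Ht)). Qed.

Lemma smooth_on_continuity i j t u :
  inIo tbar t -> continuity_2d_pt (DtN i (DuN j f)) t u.
Proof. intros Ht. apply continuity_2d_pt_filterlim, (proj1 Hf i j t u Ht). Qed.

Lemma smooth_on_ex_derive_u j t u : inI tbar t -> ex_derive (fun u' => DuN j f t u') u.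
Proof. intros Ht. exact (proj1 (proj2 Hf j t u Ht)). Qed.

Lemma smooth_on_continuity_clamp j s u :
  inI tbar (Rmax 0 s) -> continuity_2d_pt (fun a b => DuN j f (Rmax 0 a) b) s u.
Proof. intros Hs. apply continuity_2d_pt_clamp, (proj2 Hf j _ u Hs). Qed.

Lemma smooth_on_Dt_is_derive_u t u :
  inIo tbar t -> is_derive (fun u' => Dt f t u') u (Dt (Du f) t u).
Proof.
  intros Ht. apply is_derive_Dt_swap; [|exact (smooth_on_continuity 1 1 t u Ht)].
  destruct (inIo_locally tbar t Ht) as [d Hd].
  exists d. intros t' u' Ht' _. specialize (Hd t' Ht').
  split; [|split].
  - exact (smooth_on_ex_derive_t 0 0 t' u' Hd).
  - exact (smooth_on_ex_derive_u 0 t' u' (inIo_inI tbar t' Hd)).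
  - exact (smooth_on_ex_derive_t 0 1 t' u' Hd).
Qed.

End SmoothOn.

Section FramedCurvatureFlow.

Variables (tbar : Rbar) (gamma : R -> R -> V3) (theta : R -> R -> R).
Hypothesis flow : framed_curvature_flow tbar gamma theta.

Lemma gfac_pos t u : inI tbar t -> 0 < gfac gamma t u.
Proof. intros Ht. destruct flow as (_ & _ & Hg & _). exact (Hg t u Ht). Qed.

Lemma kappa_pos t u : inI tbar t -> 0 < kappa gamma t u.
Proof. intros Ht. destruct flow as (_ & _ & _ & Hk & _). exact (Hk t u Ht). Qed.

Lemma DtV_flow t u : inIo tbar t ->
  DtV gamma t u = vscal (kappa gamma t u) (nu_theta gamma theta t u).
Proof.
  intros Ht. destruct flow as (_ & _ & _ & _ & _ & _ & _ & Hflow). exact (Hflow t u Ht).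
Qed.

Lemma DuV_is_deriveV_t t u :
  inIo tbar t -> is_deriveV (fun t' => DuV gamma t' u) t (DtV (DuV gamma) t u).
Proof.
  intros Ht. destruct flow as (_ & (S1 & S2 & S3) & _).
  apply is_deriveV_DeriveV.
  - exact (smooth_on_ex_derive_t _ _ S1 0 1 t u Ht).
  - exact (smooth_on_ex_derive_t _ _ S2 0 1 t u Ht).
  - exact (smooth_on_ex_derive_t _ _ S3 0 1 t u Ht).
Qed.

Lemma DuV_is_deriveV_u t u :
  inI tbar t -> is_deriveV (DuV gamma t) u (DuV (DuV gamma) t u).
Proof.
  intros Ht. destruct flow as (_ & (S1 & S2 & S3) & _).
  apply is_deriveV_DeriveV.
  - exact (smooth_on_ex_derive_u _ _ S1 1 t u Ht).
  - exact (smooth_on_ex_derive_u _ _ S2 1 t u Ht).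
  - exact (smooth_on_ex_derive_u _ _ S3 1 t u Ht).
Qed.

Lemma DtV_is_deriveV_u t u :
  inIo tbar t -> is_deriveV (fun u' => DtV gamma t u') u (DtV (DuV gamma) t u).
Proof.
  intros Ht. destruct flow as (_ & (S1 & S2 & S3) & _).
  split; [|split].
  - exact (smooth_on_Dt_is_derive_u _ _ S1 t u Ht).
  - exact (smooth_on_Dt_is_derive_u _ _ S2 t u Ht).
  - exact (smooth_on_Dt_is_derive_u _ _ S3 t u Ht).
Qed.

Lemma continuity_DuV t u : inIo tbar t -> continuity_2d_ptV (DuV gamma) t u.
Proof.
  intros Ht. destruct flow as (_ & (S1 & S2 & S3) & _).
  split; [|split].
  - exact (smooth_on_continuity _ _ S1 0 1 t u Ht).
  - exact (smooth_on_continuity _ _ S2 0 1 t u Ht).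
  - exact (smooth_on_continuity _ _ S3 0 1 t u Ht).
Qed.

Lemma continuity_DtV_DuV t u : inIo tbar t -> continuity_2d_ptV (DtV (DuV gamma)) t u.
Proof.
  intros Ht. destruct flow as (_ & (S1 & S2 & S3) & _).
  split; [|split].
  - exact (smooth_on_continuity _ _ S1 1 1 t u Ht).
  - exact (smooth_on_continuity _ _ S2 1 1 t u Ht).
  - exact (smooth_on_continuity _ _ S3 1 1 t u Ht).
Qed.

Lemma continuity_DuV_clamp s u :
  inI tbar (Rmax 0 s) -> continuity_2d_ptV (fun a b => DuV gamma (Rmax 0 a) b) s u.
Proof.
  intros Hs. destruct flow as (_ & (S1 & S2 & S3) & _).
  split; [|split].
  - exact (smooth_on_continuity_clamp _ _ S1 1 s u Hs).
  - exact (smooth_on_continuity_clamp _ _ S2 1 s u Hs).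
  - exact (smooth_on_continuity_clamp _ _ S3 1 s u Hs).
Qed.

Lemma continuity_DuV_DuV_clamp s u :
  inI tbar (Rmax 0 s) -> continuity_2d_ptV (fun a b => DuV (DuV gamma) (Rmax 0 a) b) s u.
Proof.
  intros Hs. destruct flow as (_ & (S1 & S2 & S3) & _).
  split; [|split].
  - exact (smooth_on_continuity_clamp _ _ S1 2 s u Hs).
  - exact (smooth_on_continuity_clamp _ _ S2 2 s u Hs).
  - exact (smooth_on_continuity_clamp _ _ S3 2 s u Hs).
Qed.

Lemma Tan_is_deriveV t u : inI tbar t ->
  is_deriveV (Tan gamma t) u (normalize_derivative (DuV gamma t u) (DuV (DuV gamma) t u)).
Proof.
  intros Ht.
  exact (is_deriveV_normalize (DuV gamma t) u _ (DuV_is_deriveV_u t u Ht) (gfac_pos t u Ht)).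
Qed.

Lemma DuV_Tan t u : inI tbar t ->
  DuV (Tan gamma) t u = normalize_derivative (DuV gamma t u) (DuV (DuV gamma) t u).
Proof. intros Ht. exact (is_deriveV_unique _ _ _ (Tan_is_deriveV t u Ht)). Qed.

Lemma vdot_Tan_dsTan t u : inI tbar t -> vdot (Tan gamma t u) (dsTan gamma t u) = 0.
Proof.
  intros Ht. unfold Tan, dsTan.
  rewrite vdot_scal_l, vdot_scal_r, DuV_Tan, vdot_normalize_derivative by
    (exact Ht || exact (gfac_pos t u Ht)).
  ring.
Qed.

Lemma nu_theta_rotated_normal t u :
  nu_theta gamma theta t u = rotated_normal (Tan gamma t u) (dsTan gamma t u) (theta t u).
Proof. reflexivity. Qed.

Lemma vdot_Tan_nu_theta t u :
  inI tbar t -> vdot (Tan gamma t u) (nu_theta gamma theta t u) = 0.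
Proof.
  intros Ht. rewrite nu_theta_rotated_normal.
  apply vdot_rotated_normal_l, vdot_Tan_dsTan, Ht.
Qed.

Lemma vdot_DuV_Tan_nu_theta t u : inI tbar t ->
  vdot (DuV (Tan gamma) t u) (nu_theta gamma theta t u) =
  gfac gamma t u * kappa gamma t u * cos (theta t u).
Proof.
  intros Ht. pose proof (gfac_pos t u Ht) as Hg.
  replace (DuV (Tan gamma) t u) with (vscal (gfac gamma t u) (dsTan gamma t u)).
  - rewrite vdot_scal_l, nu_theta_rotated_normal, vdot_rotated_normal_r; [unfold kappa; ring|].
    exact (kappa_pos t u Ht).
  - unfold dsTan, gfac in *. apply V3_ext; vsimpl; field; lra.
Qed.

Lemma gfac_mul_kappa t u : inI tbar t ->
  gfac gamma t u * kappa gamma t u = vnorm (DuV (Tan gamma) t u).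
Proof.
  intros Ht. pose proof (gfac_pos t u Ht) as Hg.
  unfold kappa, dsTan. rewrite vnorm_scal, Rabs_pos_eq by (left; now apply Rinv_0_lt_compat).
  unfold gfac in *. field. lra.
Qed.

Lemma vdot_Tan_DtV_DuV t u : inIo tbar t ->
  vdot (Tan gamma t u) (DtV (DuV gamma) t u) =
  - (kappa gamma t u * psi1 gamma theta t u * gfac gamma t u).
Proof.
  intros Ht. pose proof (inIo_inI tbar t Ht) as HtI.
  assert (Hd := is_derive_vdot _ _ u _ _ (Tan_is_deriveV t u HtI) (DtV_is_deriveV_u t u Ht)).
  assert (H0 : is_derive (fun u' => vdot (Tan gamma t u') (DtV gamma t u')) u 0).
  { apply (is_derive_ext (fun _ => 0)); [|exact (is_derive_const (K := R_AbsRing) 0 u)].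
    intros u'. simpl. rewrite DtV_flow, vdot_scal_r, vdot_Tan_nu_theta by assumption. ring. }
  cbv beta in Hd.
  assert (E : vdot (DuV (Tan gamma) t u) (DtV gamma t u) +
              vdot (Tan gamma t u) (DtV (DuV gamma) t u) = 0).
  { rewrite DuV_Tan, <- (is_derive_unique _ _ _ Hd) by exact HtI.
    exact (is_derive_unique _ _ _ H0). }
  rewrite DtV_flow, vdot_scal_r, vdot_DuV_Tan_nu_theta in E by assumption.
  unfold psi1. lra.
Qed.

Lemma is_derive_gfac_t t u : inIo tbar t ->
  is_derive (fun t' => gfac gamma t' u) t
    (vdot (DuV gamma t u) (DtV (DuV gamma) t u) / gfac gamma t u).
Proof.
  intros Ht.
  exact (is_derive_vnorm _ t _ (DuV_is_deriveV_t t u Ht) (gfac_pos t u (inIo_inI tbar t Ht))).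
Qed.

Lemma Derive_gfac_t t u : inIo tbar t ->
  Derive (fun t' => gfac gamma t' u) t =
  - (kappa gamma t u * psi1 gamma theta t u * gfac gamma t u).
Proof.
  intros Ht. apply is_derive_unique.
  eapply is_derive_eq; [reflexivity| |exact (is_derive_gfac_t t u Ht)].
  rewrite <- (vdot_Tan_DtV_DuV t u Ht). unfold Tan. rewrite vdot_scal_l.
  unfold Rdiv. apply Rmult_comm.
Qed.

Lemma continuity_gfac t u : inIo tbar t -> continuity_2d_pt (gfac gamma) t u.
Proof. intros Ht. exact (continuity_2d_pt_vnorm _ t u (continuity_DuV t u Ht)). Qed.

Lemma continuity_Derive_gfac_t t u : inIo tbar t ->
  continuity_2d_pt (fun a b => Derive (fun t' => gfac gamma t' b) a) t u.
Proof.
  intros Ht.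
  apply continuity_2d_pt_ext_loc
    with (f := fun a b => vdot (DuV gamma a b) (DtV (DuV gamma) a b) * / gfac gamma a b).
  - destruct (inIo_locally tbar t Ht) as [d Hd]. exists d. intros a b Ha _.
    symmetry. exact (is_derive_unique _ _ _ (is_derive_gfac_t a b (Hd a Ha))).
  - apply continuity_2d_pt_mult.
    + exact (continuity_2d_pt_vdot _ _ t u (continuity_DuV t u Ht)
                                            (continuity_DtV_DuV t u Ht)).
    + apply continuity_2d_pt_inv; [exact (continuity_gfac t u Ht)|].
      exact (Rgt_not_eq _ _ (gfac_pos t u (inIo_inI tbar t Ht))).
Qed.

Lemma curve_length_is_derive t : inIo tbar t ->
  is_derive (curve_length gamma) t
    (- RInt (fun u => kappa gamma t u * psi1 gamma theta t u * gfac gamma t u) 0 (2 * PI)).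
Proof.
  intros Ht. assert (H2PI : 0 < 2 * PI) by (pose proof PI_RGT_0; lra).
  assert (Hex : ex_RInt (fun u => Derive (fun t' => gfac gamma t' u) t) 0 (2 * PI)).
  { apply (ex_RInt_continuity_2d_pt (fun a b => Derive (fun t' => gfac gamma t' b) a));
      [lra|]. intros u _. exact (continuity_Derive_gfac_t t u Ht). }
  assert (HI : is_RInt (fun u => kappa gamma t u * psi1 gamma theta t u * gfac gamma t u) 0 (2 * PI)
                 (- RInt (fun u => Derive (fun t' => gfac gamma t' u) t) 0 (2 * PI))).
  { apply (is_RInt_ext (fun u => opp (Derive (fun t' => gfac gamma t' u) t))).
    - intros u _. rewrite (Derive_gfac_t t u Ht). apply Ropp_involutive.
    - exact (is_RInt_opp _ _ _ _ (RInt_correct _ _ _ Hex)). }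
  rewrite (is_RInt_unique _ _ _ _ HI), Ropp_involutive.
  apply is_derive_RInt_param.
  - apply (filter_imp (inIo tbar)); [|exact (inIo_locally tbar t Ht)].
    intros t' Ht' u _. eexists. exact (is_derive_gfac_t t' u Ht').
  - intros u _. exact (continuity_Derive_gfac_t t u Ht).
  - apply (filter_imp (inIo tbar)); [|exact (inIo_locally tbar t Ht)].
    intros t' Ht'. apply ex_RInt_continuity_2d_pt; [lra|].
    intros u _. exact (continuity_gfac t' u Ht').
Qed.

Lemma continuity_gfac_kappa_clamp (s u : R) : Rbar_lt 0 tbar -> Rbar_lt s tbar ->
  continuity_2d_pt (fun a b => gfac gamma (Rmax 0 a) b * kappa gamma (Rmax 0 a) b) s u.
Proof.
  intros H0 Hs. assert (Hs0 := inI_Rmax0 tbar s H0 Hs).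
  apply continuity_2d_pt_ext_loc with (f := fun a b =>
    vnorm (normalize_derivative (DuV gamma (Rmax 0 a) b) (DuV (DuV gamma) (Rmax 0 a) b))).
  - destruct (open_Rbar_lt' s tbar Hs) as [d Hd]. exists d. intros a b Ha _.
    assert (Ha0 := inI_Rmax0 tbar a H0 (Hd a Ha)).
    now rewrite gfac_mul_kappa, DuV_Tan.
  - apply continuity_2d_pt_vnorm, continuity_2d_ptV_normalize_derivative.
    + exact (continuity_DuV_clamp s u Hs0).
    + exact (continuity_DuV_DuV_clamp s u Hs0).
    + exact (gfac_pos _ u Hs0).
Qed.

(* Integrating over [0, x] only sees [Rmax 0 s = s], but the clamped density is continuous
   on a whole neighbourhood of [0], as the fundamental theorem of calculus requires. *)
Lemma traj_area_is_derive t : inIo tbar t ->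
  is_derive (traj_area gamma) t (RInt (fun u => kappa gamma t u * gfac gamma t u) 0 (2 * PI)).
Proof.
  intros Ht. assert (H2PI : 0 < 2 * PI) by (pose proof PI_RGT_0; lra).
  assert (H0 : Rbar_lt 0 tbar)
    by (apply (Rbar_le_lt_trans _ t); [simpl; left; apply Ht| apply Ht]).
  set (F s := RInt (fun u => gfac gamma (Rmax 0 s) u * kappa gamma (Rmax 0 s) u) 0 (2 * PI)).
  assert (HF : forall s : R, Rbar_lt s tbar -> continuous F s).
  { intros s Hs. apply continuous_RInt_param; [lra|].
    apply (filter_imp (fun s' : R => Rbar_lt s' tbar)); [|exact (open_Rbar_lt' s tbar Hs)].
    intros s' Hs' u _. exact (continuity_gfac_kappa_clamp s' u H0 Hs'). }
  apply is_derive_ext_loc with (f := RInt F 0).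
  - apply (filter_imp (inIo tbar)); [|exact (inIo_locally tbar t Ht)].
    intros x [Hx0 _]. unfold traj_area.
    apply (RInt_ext (V := R_CompleteNormedModule)). intros s Hs.
    rewrite Rmin_left, Rmax_right in Hs by lra.
    unfold F. now rewrite Rmax_right by lra.
  - replace (RInt (fun u => kappa gamma t u * gfac gamma t u) 0 (2 * PI)) with (F t).
    + apply (is_derive_RInt F (RInt F 0) 0 t); [|exact (HF t (proj2 Ht))].
      apply (filter_imp (inIo tbar)); [|exact (inIo_locally tbar t Ht)].
      intros x [Hx0 Hx].
      apply RInt_correct, (ex_RInt_continuous (V := R_CompleteNormedModule)).
      intros z Hz. rewrite Rmin_left, Rmax_right in Hz by lra.
      apply HF, (Rbar_le_lt_trans _ x); [simpl; lra| exact Hx].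
    + unfold F. apply RInt_ext. intros u _. rewrite Rmax_right by (destruct Ht; lra).
      apply Rmult_comm.
Qed.

End FramedCurvatureFlow.

Theorem mainTheorem7 (tbar : Rbar) (gamma : R -> R -> V3) (theta : R -> R -> R) :
  framed_curvature_flow tbar gamma theta ->
  forall t : R, inIo tbar t ->
    is_derive (curve_length gamma) t
      (- RInt (fun u => kappa gamma t u * psi1 gamma theta t u * gfac gamma t u) 0 (2 * PI))
    /\
    is_derive (traj_area gamma) t
      (RInt (fun u => kappa gamma t u * gfac gamma t u) 0 (2 * PI)).
Proof.
  intros Hflow t Ht. split.
  - exact (curve_length_is_derive tbar gamma theta Hflow t Ht).
  - exact (traj_area_is_derive tbar gamma theta Hflow t Ht).
Qed.
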